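(* Equip $\mathbf{Cat}$ with its cartesian closed structure (tensor = product of categories, unit = terminal category $1$, both residuals given by functor categories: $\mathcal A\backslash\mathcal C:=[\mathcal A,\mathcal C]$, $\mathcal C/\mathcal B:=[\mathcal B,\mathcal C]$), and equip $\mathbf{Psh}$ with: tensor $(\mathcal A,\phi)\otimes(\mathcal B,\psi):=(\mathcal A\times\mathcal B,\ (a,b)\mapsto\phi(a)\times\psi(b))$; unit $(1,\ *\mapsto\{*\})$; left residual $(\mathcal A,\phi)\backslash(\mathcal C,\omega):=([\mathcal A,\mathcal C],\ F\mapsto\int_{a}\mathbf{Set}(\phi(a),\omega(Fa)))$; right residual $(\mathcal C,\omega)/(\mathcal B,\psi):=([\mathcal B,\mathcal C],\ F\mapsto\int_{b}\mathbf{Set}(\psi(b),\omega(Fb)))$, with the evident structure maps. Then $\mathbf{upc}:\mathbf{Psh}\to\mathbf{Cat}$ is a closed monoidal refinement system, and it has all pullbacks and all pushforwards: for $F:\mathcal A\to\mathcal B$, the pullback of $\psi\sqsubset\mathcal B$ is $F^*\psi=a\mapsto\psi(Fa)$ and the pushforward of $\phi\sqsubset\mathcal A$ is $F_!\phi=b\mapsto\int^{a}\mathcal B(b,Fa)\times\phi(a)$.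
   Context: A refinement system is a functor $\mathbf{t}:\mathcal{D}\to\mathcal{T}$; composition is written diagrammatically. Write $P\sqsubset A$ if $\mathbf t(P)=A$; a derivation of $P\Rightarrow_c Q$ is a morphism $\alpha:P\to Q$ with $\mathbf t(\alpha)=c$. A pullback of $Q\sqsubset B$ along $c:A\to B$ is $c^*Q\sqsubset A$ with a derivation $\lambda$ of $c^*Q\Rightarrow_cQ$ such that post-composition with $\lambda$ is a bijection from derivations of $P\Rightarrow_d c^*Q$ to derivations of $P\Rightarrow_{d;c}Q$ for all $P\sqsubset X$, $d:X\to A$; a pushforward of $P\sqsubset A$ along $c:A\to B$ is $c_!P\sqsubset B$ with a derivation $\kappa$ of $P\Rightarrow_cc_!P$ such that pre-composition with $\kappa$ is a bijection from derivations of $c_!P\Rightarrow_dQ$ to derivations of $P\Rightarrow_{c;d}Q$ for all $Q\sqsubset Y$, $d:B\to Y$ (both determined up to vertical isomorphism, i.e. isomorphism in the domain category lying over an identity). A closed monoidal refinement system is a functor between closed monoidal categories (monoidal categories with left residual $X\backslash Z$ right adjoint to $X\otimes-$ and right residual $Z/Y$ right adjoint to $-\otimes Y$) which strictly preserves tensor, unit and both residuals with their structure maps. The refinement system of presheaves $\mathbf{upc}:\mathbf{Psh}\to\mathbf{Cat}$: $\mathbf{Cat}$ is the category of categories and functors; objects of $\mathbf{Psh}$ are pairs $(\mathcal A,\phi)$ with $\phi:\mathcal A^{op}\to\mathbf{Set}$; morphisms $(\mathcal A,\phi)\to(\mathcal B,\psi)$ are pairs $(F,\theta)$ with $F:\mathcal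 A\to\mathcal B$ a functor and $\theta:\phi\Rightarrow\psi\circ F^{op}$ a natural transformation; $\mathbf{upc}$ is the forgetful functor $(\mathcal A,\phi)\mapsto\mathcal A$. $\int_a$ and $\int^a$ denote end and coend. *)

From Stdlib Require Import FunctionalExtensionality ProofIrrelevance
  PropExtensionality Relations.Relation_Operators.

Set Implicit Arguments.
Unset Strict Implicit.

(* Small categories (objects of Cat).  Composition is diagrammatic:     *)
(* comp f g = "f ; g".                                                  *)
Unset Implicit Arguments.
Record Category := {
  ob : Type;
  hom : ob -> ob -> Type;
  idm : forall a, hom a a;
  comp : forall a b c, hom a b -> hom b c -> hom a c;
  comp_idl : forall a b (f : hom a b), comp a a b (idm a) f = f;
  comp_idr : forall a b (f : hom a b), comp a b b f (idm b) = f;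
  comp_assoc : forall a b c d (f : hom a b) (g : hom b c) (h : hom c d),
      comp a c d (comp a b c f g) h = comp a b d f (comp b c d g h) }.
Set Implicit Arguments.
Arguments hom {_} _ _.
Arguments idm {_} _.
Arguments comp {_ _ _ _} _ _.

Unset Implicit Arguments.
Record Functor (A B : Category) := {
  fobj : ob A -> ob B;
  fmap : forall a a', hom a a' -> hom (fobj a) (fobj a');
  fmap_id : forall a, fmap a a (idm a) = idm (fobj a);
  fmap_comp : forall a b c (f : hom a b) (g : hom b c),
      fmap a c (comp f g) = comp (fmap a b f) (fmap b c g) }.
Set Implicit Arguments.
Arguments fobj {_ _} _ _.
Arguments fmap {_ _} _ {_ _} _.

Definition fid (A : Category) : Functor A A.
Proof.
  refine {| fobj := fun a => a; fmap := fun a a' f => f |}; reflexivity.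
Defined.

Definition fcomp (A B C : Category) (F : Functor A B) (G : Functor B C) : Functor A C.
Proof.
  refine {| fobj := fun a => fobj G (fobj F a);
            fmap := fun a a' f => fmap G (fmap F f) |}.
  - intro a; rewrite !fmap_id; reflexivity.
  - intros; rewrite !fmap_comp; reflexivity.
Defined.

Unset Implicit Arguments.
Record NatTrans (A B : Category) (F G : Functor A B) := {
  ntc : forall a, hom (fobj F a) (fobj G a);
  ntc_nat : forall a a' (u : hom a a'),
      comp (fmap F u) (ntc a') = comp (ntc a) (fmap G u) }.
Set Implicit Arguments.
Arguments ntc {_ _ _ _} _ _.
Arguments NatTrans {A B} F G.
Arguments ntc_nat {_ _ _ _} _ _ _ _.

Lemma nt_ext (A B : Category) (F G : Functor A B) (s t : NatTrans F G) :
  (forall a, ntc s a = ntc t a) -> s = t.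
Proof.
  destruct s as [s Hs], t as [t Ht]; simpl; intro H.
  assert (s = t) by (extensionality a; apply H). subst t.
  f_equal; apply proof_irrelevance.
Qed.

Definition nt_id (A B : Category) (F : Functor A B) : NatTrans F F.
Proof.
  refine {| ntc := fun a => idm (fobj F a) |}.
  intros; rewrite comp_idl, comp_idr; reflexivity.
Defined.

Definition nt_comp (A B : Category) (F G H : Functor A B)
  (s : NatTrans F G) (t : NatTrans G H) : NatTrans F H.
Proof.
  refine {| ntc := fun a => comp (ntc s a) (ntc t a) |}.
  intros a a' u.
  rewrite <- comp_assoc, ntc_nat, comp_assoc, ntc_nat, comp_assoc; reflexivity.
Defined.

Definition FunCat (A B : Category) : Category.
Proof.
  refine {| ob := Functor A B; hom := @NatTrans A B;
            idm := @nt_id A B; comp := @nt_comp A B |}.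
  - intros; apply nt_ext; intro; simpl; apply comp_idl.
  - intros; apply nt_ext; intro; simpl; apply comp_idr.
  - intros; apply nt_ext; intro; simpl; apply comp_assoc.
Defined.

Definition ProdCat (A B : Category) : Category.
Proof.
  refine {| ob := (ob A * ob B)%type;
            hom := fun x y => (hom (fst x) (fst y) * hom (snd x) (snd y))%type;
            idm := fun x => (idm (fst x), idm (snd x));
            comp := fun x y z f g => (comp (fst f) (fst g), comp (snd f) (snd g)) |}.
  - intros a b [f g]; simpl; rewrite !comp_idl; reflexivity.
  - intros a b [f g]; simpl; rewrite !comp_idr; reflexivity.
  - intros a b c d [f f'] [g g'] [h h']; simpl; rewrite !comp_assoc; reflexivity.
Defined.

Definition One : Category.
Proof.
  refine {| ob := unit; hom := fun _ _ => unit;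
            idm := fun _ => tt; comp := fun _ _ _ _ _ => tt |};
  intros; repeat match goal with u : unit |- _ => destruct u end; reflexivity.
Defined.

Definition fprod (A B A' B' : Category) (F : Functor A A') (G : Functor B B')
  : Functor (ProdCat A B) (ProdCat A' B').
Proof.
  refine (@Build_Functor (ProdCat A B) (ProdCat A' B') (fun x => (fobj F (fst x), fobj G (snd x))) (fun x y f => (fmap F (fst f), fmap G (snd f))) _ _).
  - intros; simpl; rewrite !fmap_id; reflexivity.
  - intros; simpl; rewrite !fmap_comp; reflexivity.
Defined.

Definition cassoc (A B C : Category)
  : Functor (ProdCat (ProdCat A B) C) (ProdCat A (ProdCat B C)).
Proof.
  refine (@Build_Functor (ProdCat (ProdCat A B) C) (ProdCat A (ProdCat B C)) (fun x => (fst (fst x), (snd (fst x), snd x))) (fun x y f => (fst (fst f), (snd (fst f), snd f))) _ _);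
  reflexivity.
Defined.

Definition clam (A : Category) : Functor (ProdCat One A) A.
Proof.
  refine (@Build_Functor (ProdCat One A) (A) (fun x => snd x) (fun x y f => snd f) _ _); reflexivity.
Defined.

Definition crho (A : Category) : Functor (ProdCat A One) A.
Proof.
  refine (@Build_Functor (ProdCat A One) (A) (fun x => fst x) (fun x y f => fst f) _ _); reflexivity.
Defined.

Definition clev (A C : Category) : Functor (ProdCat A (FunCat A C)) C.
Proof.
  refine (@Build_Functor (ProdCat A (FunCat A C)) (C) (fun p => fobj (snd p) (fst p)) (fun p p' f => comp (fmap (snd p) (fst f)) (ntc (snd f) (fst p'))) _ _).
  - intros [a F]; simpl; rewrite fmap_id; apply comp_idl.
  - intros [a F] [a' G] [a'' H] [u s] [u' s']; simpl.
    rewrite fmap_comp, !comp_assoc; f_equal.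
    rewrite <- !comp_assoc; f_equal; apply ntc_nat.
Defined.

Definition crev (C B : Category) : Functor (ProdCat (FunCat B C) B) C.
Proof.
  refine (@Build_Functor (ProdCat (FunCat B C) B) (C) (fun p => fobj (fst p) (snd p)) (fun p p' f => comp (fmap (fst p) (snd f)) (ntc (fst f) (snd p'))) _ _).
  - intros [F b]; simpl; rewrite fmap_id; apply comp_idl.
  - intros [F b] [G b'] [H b''] [s v] [s' v']; simpl.
    rewrite fmap_comp, !comp_assoc; f_equal.
    rewrite <- !comp_assoc; f_equal; apply ntc_nat.
Defined.

(* Large (pre)categories: Cat and Psh.  Their category laws are stated  *)
(* as a predicate (is_lcat) and proved as part of the main theorem.     *)
Record LPreCat := {
  lob : Type;
  lhom : lob -> lob -> Type;
  lid : forall a, lhom a a;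
  lcomp : forall a b c, lhom a b -> lhom b c -> lhom a c }.
Arguments lhom {_} _ _.
Arguments lid {_} _.
Arguments lcomp {_ _ _ _} _ _.

Definition is_lcat (C : LPreCat) : Prop :=
  (forall (a b : lob C) (f : lhom a b), lcomp (lid a) f = f) /\
  (forall (a b : lob C) (f : lhom a b), lcomp f (lid b) = f) /\
  (forall (a b c d : lob C) (f : lhom a b) (g : lhom b c) (h : lhom c d),
      lcomp (lcomp f g) h = lcomp f (lcomp g h)).

Record LPreFunctor (C D : LPreCat) := {
  lfobj : lob C -> lob D;
  lfmap : forall a b, lhom a b -> lhom (lfobj a) (lfobj b) }.
Arguments lfobj {_ _} _ _.
Arguments lfmap {_ _} _ {_ _} _.

Definition is_lfunctor (C D : LPreCat) (F : LPreFunctor C D) : Prop :=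
  (forall a : lob C, lfmap F (lid a) = lid (lfobj F a)) /\
  (forall (a b c : lob C) (f : lhom a b) (g : lhom b c),
      lfmap F (lcomp f g) = lcomp (lfmap F f) (lfmap F g)).

Definition lcast (C : LPreCat) (a a' b b' : lob C) (e1 : a = a') (e2 : b = b')
  (f : lhom a b) : lhom a' b' :=
  match e1 in _ = x, e2 in _ = y return lhom x y with
  | eq_refl, eq_refl => f end.

Record CMData (C : LPreCat) := {
  cm_tens : lob C -> lob C -> lob C;
  cm_tensm : forall a b a' b', lhom a a' -> lhom b b' ->
      lhom (cm_tens a b) (cm_tens a' b');
  cm_unit : lob C;
  cm_alpha : forall a b c, lhom (cm_tens (cm_tens a b) c) (cm_tens a (cm_tens b c));
  cm_lambda : forall a, lhom (cm_tens cm_unit a) a;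
  cm_rho : forall a, lhom (cm_tens a cm_unit) a;
  cm_lres : lob C -> lob C -> lob C;
  cm_lev : forall X Z, lhom (cm_tens X (cm_lres X Z)) Z;
  cm_rres : lob C -> lob C -> lob C;
  cm_rev : forall Z Y, lhom (cm_tens (cm_rres Z Y) Y) Z }.
Arguments cm_tens {_} _ _ _.
Arguments cm_tensm {_} _ {_ _ _ _} _ _.
Arguments cm_unit {_} _.
Arguments cm_alpha {_} _ _ _ _.
Arguments cm_lambda {_} _ _.
Arguments cm_rho {_} _ _.
Arguments cm_lres {_} _ _ _.
Arguments cm_lev {_} _ _ _.
Arguments cm_rres {_} _ _ _.
Arguments cm_rev {_} _ _ _.

Definition is_iso (C : LPreCat) (a b : lob C) (f : lhom a b) : Prop :=
  exists g : lhom b a, lcomp f g = lid a /\ lcomp g f = lid b.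

Definition is_closed_monoidal (C : LPreCat) (M : CMData C) : Prop :=
  is_lcat C /\
  (forall a b, cm_tensm M (lid a) (lid b) = lid (cm_tens M a b)) /\
  (forall a b c a' b' c' (f : lhom a b) (g : lhom b c) (f' : lhom a' b') (g' : lhom b' c'),
      cm_tensm M (lcomp f g) (lcomp f' g') = lcomp (cm_tensm M f f') (cm_tensm M g g')) /\
  (forall a b c, is_iso (cm_alpha M a b c)) /\
  (forall a b c a' b' c' (f : lhom a a') (g : lhom b b') (h : lhom c c'),
      lcomp (cm_tensm M (cm_tensm M f g) h) (cm_alpha M a' b' c')
      = lcomp (cm_alpha M a b c) (cm_tensm M f (cm_tensm M g h))) /\
  (forall a, is_iso (cm_lambda M a)) /\
  (forall a b (f : lhom a b),
      lcomp (cm_tensm M (lid (cm_unit M)) f) (cm_lambda M b) = lcomp (cm_lambda M a) f) /\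
  (forall a, is_iso (cm_rho M a)) /\
  (forall a b (f : lhom a b),
      lcomp (cm_tensm M f (lid (cm_unit M))) (cm_rho M b) = lcomp (cm_rho M a) f) /\
  (forall a b c d,
      lcomp (cm_alpha M (cm_tens M a b) c d) (cm_alpha M a b (cm_tens M c d))
      = lcomp (cm_tensm M (cm_alpha M a b c) (lid d))
          (lcomp (cm_alpha M a (cm_tens M b c) d) (cm_tensm M (lid a) (cm_alpha M b c d)))) /\
  (forall a b,
      lcomp (cm_alpha M a (cm_unit M) b) (cm_tensm M (lid a) (cm_lambda M b))
      = cm_tensm M (cm_rho M a) (lid b)) /\
  (forall X Y Z (f : lhom (cm_tens M X Y) Z),
      exists! g : lhom Y (cm_lres M X Z),
        lcomp (cm_tensm M (lid X) g) (cm_lev M X Z) = f) /\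
  (forall X Y Z (f : lhom (cm_tens M X Y) Z),
      exists! g : lhom X (cm_rres M Z Y),
        lcomp (cm_tensm M g (lid Y)) (cm_rev M Z Y) = f).

Definition strict_closed_monoidal (C D : LPreCat) (t : LPreFunctor C D)
  (M : CMData C) (N : CMData D) : Prop :=
  exists (Ht : forall P Q, lfobj t (cm_tens M P Q) = cm_tens N (lfobj t P) (lfobj t Q))
         (Hu : lfobj t (cm_unit M) = cm_unit N)
         (Hl : forall X Z, lfobj t (cm_lres M X Z) = cm_lres N (lfobj t X) (lfobj t Z))
         (Hr : forall Z Y, lfobj t (cm_rres M Z Y) = cm_rres N (lfobj t Z) (lfobj t Y)),
  (forall P Q P' Q' (f : lhom P P') (g : lhom Q Q'),
      lcast (Ht P Q) (Ht P' Q') (lfmap t (cm_tensm M f g))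
      = cm_tensm N (lfmap t f) (lfmap t g)) /\
  (forall P Q R,
      lcast (eq_trans (Ht (cm_tens M P Q) R)
                      (f_equal (fun x => cm_tens N x (lfobj t R)) (Ht P Q)))
            (eq_trans (Ht P (cm_tens M Q R))
                      (f_equal (cm_tens N (lfobj t P)) (Ht Q R)))
            (lfmap t (cm_alpha M P Q R))
      = cm_alpha N (lfobj t P) (lfobj t Q) (lfobj t R)) /\
  (forall P,
      lcast (eq_trans (Ht (cm_unit M) P)
                      (f_equal (fun x => cm_tens N x (lfobj t P)) Hu))
            eq_refl (lfmap t (cm_lambda M P))
      = cm_lambda N (lfobj t P)) /\
  (forall P,
      lcast (eq_trans (Ht P (cm_unit M))
                      (f_equal (cm_tens N (lfobj t P)) Hu))
            eq_refl (lfmap t (cm_rho M P))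
      = cm_rho N (lfobj t P)) /\
  (forall X Z,
      lcast (eq_trans (Ht X (cm_lres M X Z))
                      (f_equal (cm_tens N (lfobj t X)) (Hl X Z)))
            eq_refl (lfmap t (cm_lev M X Z))
      = cm_lev N (lfobj t X) (lfobj t Z)) /\
  (forall Z Y,
      lcast (eq_trans (Ht (cm_rres M Z Y) Y)
                      (f_equal (fun x => cm_tens N x (lfobj t Y)) (Hr Z Y)))
            eq_refl (lfmap t (cm_rev M Z Y))
      = cm_rev N (lfobj t Z) (lfobj t Y)).

Definition is_cm_refinement_system (D T : LPreCat) (t : LPreFunctor D T)
  (M : CMData D) (N : CMData T) : Prop :=
  is_closed_monoidal M /\ is_closed_monoidal N /\ is_lfunctor t /\
  strict_closed_monoidal t M N.

(* P ⊏ A means lfobj t P = A; a derivation of P =>_c Q is a morphism    *)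
(* alpha : P -> Q with lfmap t alpha = c.                               *)

Definition is_pullback (D T : LPreCat) (t : LPreFunctor D T)
  (A : lob T) (Q : lob D) (c : lhom A (lfobj t Q))
  (R : lob D) (eR : lfobj t R = A) (lam : lhom R Q) : Prop :=
  lfmap t lam = lcast (eq_sym eR) eq_refl c /\
  forall (P : lob D) (d : lhom (lfobj t P) A) (beta : lhom P Q),
    lfmap t beta = lcomp d c ->
    exists! alpha : lhom P R,
      lfmap t alpha = lcast eq_refl (eq_sym eR) d /\ lcomp alpha lam = beta.

Definition is_pushforward (D T : LPreCat) (t : LPreFunctor D T)
  (P : lob D) (B : lob T) (c : lhom (lfobj t P) B)
  (R : lob D) (eR : lfobj t R = B) (kappa : lhom P R) : Prop :=
  lfmap t kappa = lcast eq_refl (eq_sym eR) c /\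
  forall (Q : lob D) (d : lhom B (lfobj t Q)) (beta : lhom P Q),
    lfmap t beta = lcomp c d ->
    exists! alpha : lhom R Q,
      lfmap t alpha = lcast (eq_sym eR) eq_refl d /\ lcomp kappa alpha = beta.

Definition Cat : LPreCat :=
  @Build_LPreCat Category Functor fid (fun A B C F G => fcomp F G).

Definition CatCM : CMData Cat :=
  {| cm_tens := ProdCat : lob Cat -> lob Cat -> lob Cat;
     cm_tensm := fun A B A' B' F G => fprod F G;
     cm_unit := One;
     cm_alpha := cassoc;
     cm_lambda := clam;
     cm_rho := crho;
     cm_lres := fun X Z => FunCat X Z;
     cm_lev := fun X Z => clev X Z;
     cm_rres := fun Z Y => FunCat Y Z;
     cm_rev := fun Z Y => crev Z Y |}.

(* Presheaves: functors A^op -> Set, written out. *)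
Unset Implicit Arguments.
Record Presheaf (A : Category) := {
  pob : ob A -> Type;
  pmap : forall a b, hom a b -> pob b -> pob a;
  pmap_id : forall a x, pmap a a (idm a) x = x;
  pmap_comp : forall a b c (f : hom a b) (g : hom b c) x,
      pmap a c (comp f g) x = pmap a b f (pmap b c g x) }.
Set Implicit Arguments.
Arguments pob {_} _ _.
Arguments pmap {_} _ {_ _} _ _.

Record PshOb := mkPsh { pcat : Category; psh : Presheaf pcat }.

(* natural transformations  phi => psi o F^op *)
Definition PNat (A B : Category) (phi : Presheaf A) (psi : Presheaf B)
  (F : Functor A B) : Type :=
  { th : forall a, pob phi a -> pob psi (fobj F a) |
    forall a a' (u : hom a a') x,
      th a (pmap phi u x) = pmap psi (fmap F u) (th a' x) }.

Definition PshHom (P Q : PshOb) : Type :=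
  { F : Functor (pcat P) (pcat Q) & PNat (psh P) (psh Q) F }.

Definition psh_id (P : PshOb) : PshHom P P.
Proof.
  exists (fid (pcat P)). exists (fun a x => x). reflexivity.
Defined.

Definition psh_comp (P Q R : PshOb) (f : PshHom P Q) (g : PshHom Q R) : PshHom P R.
Proof.
  exists (fcomp (projT1 f) (projT1 g)).
  exists (fun a x => proj1_sig (projT2 g) (fobj (projT1 f) a)
                       (proj1_sig (projT2 f) a x)).
  intros a a' u x; simpl.
  rewrite (proj2_sig (projT2 f)), (proj2_sig (projT2 g)); reflexivity.
Defined.

Definition Psh : LPreCat :=
  @Build_LPreCat PshOb PshHom psh_id psh_comp.

Definition upc : LPreFunctor Psh Cat :=
  @Build_LPreFunctor Psh Cat (fun P : PshOb => pcat P : Category)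
    (fun (P Q : PshOb) (f : PshHom P Q) => projT1 f).

Lemma sig_ext (X : Type) (Pr : X -> Prop) (s t : {x | Pr x}) :
  proj1_sig s = proj1_sig t -> s = t.
Proof.
  destruct s, t; simpl; intro; subst; f_equal; apply proof_irrelevance.
Qed.

Definition prodpsh (A B : Category) (phi : Presheaf A) (psi : Presheaf B)
  : Presheaf (ProdCat A B).
Proof.
  refine (@Build_Presheaf (ProdCat A B) (fun p => (pob phi (fst p) * pob psi (snd p))%type) (fun p q f z => (pmap phi (fst f) (fst z), pmap psi (snd f) (snd z))) _ _).
  - intros [a b] [x y]; simpl; rewrite !pmap_id; reflexivity.
  - intros p q r [f f'] [g g'] [x y]; simpl; rewrite !pmap_comp; reflexivity.
Defined.

Definition unitpsh : Presheaf One.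
Proof.
  refine (@Build_Presheaf (One) (fun _ => unit) (fun _ _ _ z => z) _ _); reflexivity.
Defined.

(* the end  \int_a Set(phi a, omega (F a)) : the set of wedges *)
Definition end_set (A C : Category) (phi : Presheaf A) (omega : Presheaf C)
  (F : Functor A C) : Type :=
  { m : forall a, pob phi a -> pob omega (fobj F a) |
    forall a a' (u : hom a a') x,
      m a (pmap phi u x) = pmap omega (fmap F u) (m a' x) }.

Definition endpsh (A C : Category) (phi : Presheaf A) (omega : Presheaf C)
  : Presheaf (FunCat A C).
Proof.
  unshelve refine (@Build_Presheaf (FunCat A C) (fun F => end_set phi omega F) (fun F G s m =>
                       exist _ (fun a x => pmap omega (ntc s a) (proj1_sig m a x)) _) _ _).
  - simpl. intros a a' u x.
    rewrite (proj2_sig m), <- !pmap_comp, (ntc_nat s). reflexivity.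
  - intros F m; apply sig_ext; simpl.
    extensionality a; extensionality x; apply pmap_id.
  - intros F G H s t m; apply sig_ext; simpl.
    extensionality a; extensionality x; apply pmap_comp.
Defined.

Definition psh_tens (P Q : PshOb) : PshOb :=
  mkPsh (prodpsh (psh P) (psh Q)).

Definition psh_tensm (P Q P' Q' : PshOb) (f : PshHom P P') (g : PshHom Q Q')
  : PshHom (psh_tens P Q) (psh_tens P' Q').
Proof.
  exists (fprod (projT1 f) (projT1 g)).
  exists (fun p z => (proj1_sig (projT2 f) (fst p) (fst z),
                      proj1_sig (projT2 g) (snd p) (snd z))).
  intros p p' u z; simpl.
  rewrite (proj2_sig (projT2 f)), (proj2_sig (projT2 g)); reflexivity.
Defined.

Definition psh_unit : PshOb := mkPsh unitpsh.

Definition psh_alpha (P Q R : PshOb)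
  : PshHom (psh_tens (psh_tens P Q) R) (psh_tens P (psh_tens Q R)).
Proof.
  exists (cassoc (pcat P) (pcat Q) (pcat R)).
  exists (fun p z => (fst (fst z), (snd (fst z), snd z))).
  reflexivity.
Defined.

Definition psh_lambda (P : PshOb) : PshHom (psh_tens psh_unit P) P.
Proof.
  exists (clam (pcat P)). exists (fun p z => snd z). reflexivity.
Defined.

Definition psh_rho (P : PshOb) : PshHom (psh_tens P psh_unit) P.
Proof.
  exists (crho (pcat P)). exists (fun p z => fst z). reflexivity.
Defined.

Definition psh_lres (P R : PshOb) : PshOb :=
  mkPsh (endpsh (psh P) (psh R)).

Definition psh_lev (P R : PshOb) : PshHom (psh_tens P (psh_lres P R)) R.
Proof.
  exists (clev (pcat P) (pcat R)).
  exists (fun p (z : pob (psh (psh_tens P (psh_lres P R))) p) => proj1_sig (snd z) (fst p) (fst z)).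
  intros [a F] [a' G] [u s] [x m]; simpl.
  rewrite (ntc_nat s), pmap_comp, (proj2_sig m); reflexivity.
Defined.

Definition psh_rres (R Q : PshOb) : PshOb :=
  mkPsh (endpsh (psh Q) (psh R)).

Definition psh_rev (R Q : PshOb) : PshHom (psh_tens (psh_rres R Q) Q) R.
Proof.
  exists (crev (pcat R) (pcat Q)).
  exists (fun p (z : pob (psh (psh_tens (psh_rres R Q) Q)) p) => proj1_sig (fst z) (snd p) (snd z)).
  intros [F b] [G b'] [s v] [m y]; simpl.
  rewrite (ntc_nat s), pmap_comp, (proj2_sig m); reflexivity.
Defined.

Definition PshCM : CMData Psh :=
  {| cm_tens := psh_tens : lob Psh -> lob Psh -> lob Psh;
     cm_tensm := psh_tensm;
     cm_unit := psh_unit;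
     cm_alpha := psh_alpha;
     cm_lambda := psh_lambda;
     cm_rho := psh_rho;
     cm_lres := psh_lres;
     cm_lev := psh_lev;
     cm_rres := psh_rres;
     cm_rev := psh_rev |}.

Definition pullpsh (A B : Category) (F : Functor A B) (psi : Presheaf B) : Presheaf A.
Proof.
  refine (@Build_Presheaf (A) (fun a => pob psi (fobj F a)) (fun a a' u y => pmap psi (fmap F u) y) _ _).
  - intros; rewrite fmap_id; apply pmap_id.
  - intros; rewrite fmap_comp; apply pmap_comp.
Defined.

(* quotients of types, as sets of equivalence classes *)
Definition eqv (X : Type) (R : X -> X -> Prop) : X -> X -> Prop :=
  clos_refl_sym_trans X R.

Definition quot (X : Type) (R : X -> X -> Prop) : Type :=
  { S : X -> Prop | exists x, S = eqv R x }.

Lemma eqv_map (X Y : Type) (R : X -> X -> Prop) (R' : Y -> Y -> Prop) (f : X -> Y)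
  (Hf : forall x y, R x y -> R' (f x) (f y)) x y :
  eqv R x y -> eqv R' (f x) (f y).
Proof.
  induction 1.
  - apply rst_step; auto.
  - apply rst_refl.
  - apply rst_sym; auto.
  - eapply rst_trans; eauto.
Qed.

Lemma qmap_proof (X Y : Type) (R : X -> X -> Prop) (R' : Y -> Y -> Prop) (f : X -> Y)
  (Hf : forall x y, R x y -> R' (f x) (f y)) (S : X -> Prop) x0 :
  S = eqv R x0 ->
  (fun y => exists x, S x /\ eqv R' (f x) y) = eqv R' (f x0).
Proof.
  intros ->. extensionality y. apply propositional_extensionality. split.
  - intros [x [H1 H2]]. eapply rst_trans; [eapply eqv_map; eauto | exact H2].
  - intros H. exists x0. split; [apply rst_refl | exact H].
Qed.

Definition qmap (X Y : Type) (R : X -> X -> Prop) (R' : Y -> Y -> Prop) (f : X -> Y)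
  (Hf : forall x y, R x y -> R' (f x) (f y)) (S : quot R) : quot R'.
Proof.
  exists (fun y => exists x, proj1_sig S x /\ eqv R' (f x) y).
  destruct S as [S [x0 HS]]. exists (f x0). simpl.
  exact (qmap_proof Hf HS).
Defined.

Lemma qmap_id (X : Type) (R : X -> X -> Prop) (f : X -> X)
  (Hf : forall x y, R x y -> R (f x) (f y)) (S : quot R) :
  (forall x, f x = x) -> qmap Hf S = S.
Proof.
  intro Hid. apply sig_ext. destruct S as [S [x0 HS]]; simpl.
  rewrite (qmap_proof Hf HS), Hid. symmetry; exact HS.
Qed.

Lemma qmap_comp (X Y Z : Type) (R : X -> X -> Prop) (R' : Y -> Y -> Prop)
  (R'' : Z -> Z -> Prop) (f : X -> Y) (g : Y -> Z) (h : X -> Z)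
  (Hf : forall x y, R x y -> R' (f x) (f y))
  (Hg : forall x y, R' x y -> R'' (g x) (g y))
  (Hh : forall x y, R x y -> R'' (h x) (h y)) (S : quot R) :
  (forall x, h x = g (f x)) -> qmap Hh S = qmap Hg (qmap Hf S).
Proof.
  intro Hc. apply sig_ext. destruct S as [S [x0 HS]]; simpl.
  rewrite (qmap_proof Hh HS), (qmap_proof Hg (qmap_proof Hf HS)), Hc.
  reflexivity.
Qed.

Definition coend_carrier (A B : Category) (F : Functor A B) (phi : Presheaf A)
  (b : ob B) : Type :=
  { a : ob A & (hom b (fobj F a) * pob phi a)%type }.

Definition coend_rel (A B : Category) (F : Functor A B) (phi : Presheaf A)
  (b : ob B) (p q : coend_carrier F phi b) : Prop :=
  exists (a a' : ob A) (u : hom a a') (g : hom b (fobj F a)) (x : pob phi a'),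
    p = existT _ a (g, pmap phi u x) /\ q = existT _ a' (comp g (fmap F u), x).

Arguments coend_rel {A B} F phi b p q.

Definition coend_set (A B : Category) (F : Functor A B) (phi : Presheaf A)
  (b : ob B) : Type := quot (coend_rel F phi b).

Definition coend_pre (A B : Category) (F : Functor A B) (phi : Presheaf A)
  (b' b : ob B) (h : hom b' b) (p : coend_carrier F phi b) : coend_carrier F phi b' :=
  existT _ (projT1 p) (comp h (fst (projT2 p)), snd (projT2 p)).

Lemma coend_pre_rel (A B : Category) (F : Functor A B) (phi : Presheaf A)
  (b' b : ob B) (h : hom b' b) p q :
  coend_rel F phi b p q -> coend_rel F phi b' (coend_pre h p) (coend_pre h q).
Proof.
  intros (a & a' & u & g & x & -> & ->).
  exists a, a', u, (comp h g), x; simpl; split; [reflexivity|].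
  rewrite comp_assoc; reflexivity.
Qed.

Definition coendpsh (A B : Category) (F : Functor A B) (phi : Presheaf A) : Presheaf B.
Proof.
  refine (@Build_Presheaf (B) (fun b => coend_set F phi b) (fun b' b h S => qmap (coend_pre_rel (phi := phi) h) S) _ _).
  - intros b S; apply qmap_id.
    intros [a [g x]]; unfold coend_pre; simpl; rewrite comp_idl; reflexivity.
  - intros b1 b2 b3 f g S; apply qmap_comp.
    intros [a [k x]]; unfold coend_pre; simpl; rewrite comp_assoc; reflexivity.
Defined.

From Stdlib Require Import FunctionalExtensionality ProofIrrelevance
  PropExtensionality JMeq ClassicalEpsilon Eqdep Relations.Relation_Operators.
Set Implicit Arguments.
Unset Strict Implicit.

(* Every structure map of Psh is the corresponding map of Cat together with
   the evident map of elements, and the residual presheaf of ends is exactly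
   the set of wedges, i.e. of elementwise maps natural in the argument; so
   currying a morphism of Psh is currying its functor and its wedge, and all
   closed monoidal axioms of Psh reduce to those of Cat plus pointwise
   identities.  The pullback [F^* psi] is cartesian because a natural
   transformation into [psi o F] is literally one into [F^* psi].  The
   pushforward is the left Kan extension: the coend [F_! phi] is generated
   by the classes of [(a, id, x)], and a lift of [beta] along [d] is forced
   to send the class of [(a, g, x)] to [Q(d g)(beta_a x)]. *)

Lemma eq_JMeq (A : Type) (x y : A) : x = y -> JMeq x y.
Proof. intros ->; reflexivity. Qed.

Lemma functor_ext (A B : Category) (F G : Functor A B) :
  (forall a, fobj F a = fobj G a) ->
  (forall a a' (f : hom a a'), JMeq (fmap F f) (fmap G f)) -> F = G.
Proof.
  destruct F as [o1 m1 p1 q1], G as [o2 m2 p2 q2]; cbn; intros Ho Hm.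
  assert (o1 = o2) by (extensionality a; apply Ho); subst o2.
  assert (m1 = m2) by (extensionality a; extensionality a'; extensionality f;
    apply JMeq_eq, Hm); subst m2.
  f_equal; apply proof_irrelevance.
Qed.

Lemma nt_JMeq (A B : Category) (F1 G1 F2 G2 : Functor A B)
  (s : NatTrans F1 G1) (t : NatTrans F2 G2) :
  F1 = F2 -> G1 = G2 -> (forall a, JMeq (ntc s a) (ntc t a)) -> JMeq s t.
Proof.
  intros -> -> H; apply eq_JMeq, nt_ext; intro a; apply JMeq_eq, H.
Qed.

Lemma psh_hom_ext (P Q : PshOb) (f g : PshHom P Q) : projT1 f = projT1 g ->
  (forall a x, JMeq (proj1_sig (projT2 f) a x) (proj1_sig (projT2 g) a x)) ->
  f = g.
Proof.
  destruct f as [F t], g as [G s]; cbn; intros <- Ht.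
  f_equal; apply sig_ext; extensionality a; extensionality x; apply JMeq_eq, Ht.
Qed.

Lemma end_set_JMeq (A C : Category) (phi : Presheaf A) (omega : Presheaf C)
  (F1 F2 : Functor A C) (m1 : end_set phi omega F1) (m2 : end_set phi omega F2) :
  F1 = F2 -> (forall a x, JMeq (proj1_sig m1 a x) (proj1_sig m2 a x)) ->
  JMeq m1 m2.
Proof.
  intros <- H; apply eq_JMeq, sig_ext; extensionality a; extensionality x;
  apply JMeq_eq, H.
Qed.

Ltac destruct_pairs := repeat match goal with
  | x : prod _ _ |- _ => destruct x
  | x : unit |- _ => destruct x
  end.

Ltac functor_eq := apply functor_ext;
  [ intros; cbn in *; destruct_pairs; reflexivity
  | intros; cbn in *; destruct_pairs; apply JMeq_refl ].

Ltac psh_hom_eq := apply psh_hom_ext;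
  [ cbn; functor_eq | intros; cbn in *; destruct_pairs; apply JMeq_refl ].

Section ResidualsFromCurrying.
Variables (C : LPreCat) (M : CMData C).

Lemma lres_exists_unique_of_curry
  (cur : forall X Y Z, lhom (cm_tens M X Y) Z -> lhom Y (cm_lres M X Z))
  (lev_cur : forall X Y Z (f : lhom (cm_tens M X Y) Z),
     lcomp (cm_tensm M (lid X) (cur X Y Z f)) (cm_lev M X Z) = f)
  (cur_lev : forall X Y Z (g : lhom Y (cm_lres M X Z)),
     cur X Y Z (lcomp (cm_tensm M (lid X) g) (cm_lev M X Z)) = g)
  X Y Z (f : lhom (cm_tens M X Y) Z) :
  exists! g : lhom Y (cm_lres M X Z),
    lcomp (cm_tensm M (lid X) g) (cm_lev M X Z) = f.
Proof. exists (cur X Y Z f); split; [apply lev_cur | intros g <-; apply cur_lev]. Qed.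

Lemma rres_exists_unique_of_curry
  (cur : forall X Y Z, lhom (cm_tens M X Y) Z -> lhom X (cm_rres M Z Y))
  (rev_cur : forall X Y Z (f : lhom (cm_tens M X Y) Z),
     lcomp (cm_tensm M (cur X Y Z f) (lid Y)) (cm_rev M Z Y) = f)
  (cur_rev : forall X Y Z (g : lhom X (cm_rres M Z Y)),
     cur X Y Z (lcomp (cm_tensm M g (lid Y)) (cm_rev M Z Y)) = g)
  X Y Z (f : lhom (cm_tens M X Y) Z) :
  exists! g : lhom X (cm_rres M Z Y),
    lcomp (cm_tensm M g (lid Y)) (cm_rev M Z Y) = f.
Proof. exists (cur X Y Z f); split; [apply rev_cur | intros g <-; apply cur_rev]. Qed.

End ResidualsFromCurrying.

(** * Cat *)

Definition cassoc_inv (A B C : Category)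
  : Functor (ProdCat A (ProdCat B C)) (ProdCat (ProdCat A B) C).
Proof.
  refine (@Build_Functor (ProdCat A (ProdCat B C)) (ProdCat (ProdCat A B) C)
    (fun x => ((fst x, fst (snd x)), snd (snd x)))
    (fun x y f => ((fst f, fst (snd f)), snd (snd f))) _ _); reflexivity.
Defined.

Definition clam_inv (A : Category) : Functor A (ProdCat One A).
Proof.
  refine (@Build_Functor A (ProdCat One A) (fun x => (tt, x))
    (fun x y f => (tt, f)) _ _); reflexivity.
Defined.

Definition crho_inv (A : Category) : Functor A (ProdCat A One).
Proof.
  refine (@Build_Functor A (ProdCat A One) (fun x => (x, tt))
    (fun x y f => (f, tt)) _ _); reflexivity.
Defined.

Section Curry.
Variables (X Y Z : Category) (F : Functor (ProdCat X Y) Z).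

Definition curry_obj (y : ob Y) : Functor X Z.
Proof.
  refine (@Build_Functor X Z (fun x => fobj F (x, y))
    (fun x x' u => @fmap _ _ F (x, y) (x', y) (u, idm y)) _ _).
  - intro x; exact (fmap_id _ _ F (x, y)).
  - intros; rewrite <- (fmap_comp _ _ F); cbn; rewrite comp_idl; reflexivity.
Defined.

Definition curry_mor (y y' : ob Y) (v : hom y y')
  : NatTrans (curry_obj y) (curry_obj y').
Proof.
  refine (@Build_NatTrans X Z (curry_obj y) (curry_obj y')
    (fun x => @fmap _ _ F (x, y) (x, y') (idm x, v)) _).
  intros; cbn; rewrite <- !(fmap_comp _ _ F); cbn.
  rewrite !comp_idl, !comp_idr; reflexivity.
Defined.

Definition curry : Functor Y (FunCat X Z).
Proof.
  refine (@Build_Functor Y (FunCat X Z) curry_obj curry_mor _ _).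
  - intro y; apply nt_ext; intro x; exact (fmap_id _ _ F (x, y)).
  - intros; apply nt_ext; intro x; cbn.
    rewrite <- (fmap_comp _ _ F); cbn; rewrite comp_idl; reflexivity.
Defined.

Definition rcurry_obj (x : ob X) : Functor Y Z.
Proof.
  refine (@Build_Functor Y Z (fun y => fobj F (x, y))
    (fun y y' v => @fmap _ _ F (x, y) (x, y') (idm x, v)) _ _).
  - intro y; exact (fmap_id _ _ F (x, y)).
  - intros; rewrite <- (fmap_comp _ _ F); cbn; rewrite comp_idl; reflexivity.
Defined.

Definition rcurry_mor (x x' : ob X) (u : hom x x')
  : NatTrans (rcurry_obj x) (rcurry_obj x').
Proof.
  refine (@Build_NatTrans Y Z (rcurry_obj x) (rcurry_obj x')
    (fun y => @fmap _ _ F (x, y) (x', y) (u, idm y)) _).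
  intros; cbn; rewrite <- !(fmap_comp _ _ F); cbn.
  rewrite !comp_idl, !comp_idr; reflexivity.
Defined.

Definition rcurry : Functor X (FunCat Y Z).
Proof.
  refine (@Build_Functor X (FunCat Y Z) rcurry_obj rcurry_mor _ _).
  - intro x; apply nt_ext; intro y; exact (fmap_id _ _ F (x, y)).
  - intros; apply nt_ext; intro y; cbn.
    rewrite <- (fmap_comp _ _ F); cbn; rewrite comp_idl; reflexivity.
Defined.

Lemma clev_curry : fcomp (fprod (fid X) curry) (clev X Z) = F.
Proof.
  apply functor_ext; [intros [x y]; reflexivity|].
  intros [x y] [x' y'] [u v]; apply eq_JMeq; cbn.
  rewrite <- (fmap_comp _ _ F); cbn; rewrite comp_idl, comp_idr; reflexivity.
Qed.

Lemma crev_rcurry : fcomp (fprod rcurry (fid Y)) (crev Z Y) = F.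
Proof.
  apply functor_ext; [intros [x y]; reflexivity|].
  intros [x y] [x' y'] [u v]; apply eq_JMeq; cbn.
  rewrite <- (fmap_comp _ _ F); cbn; rewrite comp_idl, comp_idr; reflexivity.
Qed.

End Curry.

Section Uncurry.
Variables X Y Z : Category.

Lemma curry_obj_clev (G : Functor Y (FunCat X Z)) y :
  curry_obj (fcomp (fprod (fid X) G) (clev X Z)) y = fobj G y.
Proof.
  apply functor_ext; [reflexivity|].
  intros; apply eq_JMeq; cbn; rewrite (fmap_id _ _ G); apply comp_idr.
Qed.

Lemma curry_clev (G : Functor Y (FunCat X Z)) :
  curry (fcomp (fprod (fid X) G) (clev X Z)) = G.
Proof.
  apply functor_ext; [apply curry_obj_clev|].
  intros y y' v; apply nt_JMeq; try apply curry_obj_clev.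
  intro x; apply eq_JMeq; cbn; rewrite (fmap_id _ _ (fobj G y)); apply comp_idl.
Qed.

Lemma rcurry_obj_crev (G : Functor X (FunCat Y Z)) x :
  rcurry_obj (fcomp (fprod G (fid Y)) (crev Z Y)) x = fobj G x.
Proof.
  apply functor_ext; [reflexivity|].
  intros; apply eq_JMeq; cbn; rewrite (fmap_id _ _ G); apply comp_idr.
Qed.

Lemma rcurry_crev (G : Functor X (FunCat Y Z)) :
  rcurry (fcomp (fprod G (fid Y)) (crev Z Y)) = G.
Proof.
  apply functor_ext; [apply rcurry_obj_crev|].
  intros x x' u; apply nt_JMeq; try apply rcurry_obj_crev.
  intro y; apply eq_JMeq; cbn; rewrite (fmap_id _ _ (fobj G x)); apply comp_idl.
Qed.

End Uncurry.

Lemma lcat_Cat : is_lcat Cat.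
Proof. split; [|split]; intros; functor_eq. Qed.

Lemma closed_monoidal_CatCM : is_closed_monoidal CatCM.
Proof.
  split; [exact lcat_Cat|].
  split; [intros; functor_eq|].
  split; [intros; functor_eq|].
  split; [intros a b c; exists (cassoc_inv a b c); split; functor_eq|].
  split; [intros; functor_eq|].
  split; [intros a; exists (clam_inv a); split; functor_eq|].
  split; [intros; functor_eq|].
  split; [intros a; exists (crho_inv a); split; functor_eq|].
  split; [intros; functor_eq|].
  split; [intros; functor_eq|].
  split; [intros; functor_eq|].
  split.
  - exact (lres_exists_unique_of_curry (M := CatCM) (@clev_curry) (@curry_clev)).
  - exact (rres_exists_unique_of_curry (M := CatCM) (@crev_rcurry) (@rcurry_crev)).
Qed.

(** * Psh *)

Definition psh_alpha_inv (P Q R : PshOb)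
  : PshHom (psh_tens P (psh_tens Q R)) (psh_tens (psh_tens P Q) R).
Proof.
  exists (cassoc_inv (pcat P) (pcat Q) (pcat R)).
  exists (fun p z => ((fst z, fst (snd z)), snd (snd z))); reflexivity.
Defined.

Definition psh_lambda_inv (P : PshOb) : PshHom P (psh_tens psh_unit P).
Proof.
  exists (clam_inv (pcat P)).
  exists (fun p (z : pob (psh P) p) => (tt, z)); reflexivity.
Defined.

Definition psh_rho_inv (P : PshOb) : PshHom P (psh_tens P psh_unit).
Proof.
  exists (crho_inv (pcat P)).
  exists (fun p (z : pob (psh P) p) => (z, tt)); reflexivity.
Defined.

Section PshCurry.
Variables (X Y Z : PshOb) (f : PshHom (psh_tens X Y) Z).

Definition pcurry : PshHom Y (psh_lres X Z).
Proof.
  exists (curry (projT1 f)); unshelve eexists.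
  - intros y z; exists (fun x w => proj1_sig (projT2 f) (x, y) (w, z)).
    intros a a' u w; generalize (proj2_sig (projT2 f) (a, y) (a', y) (u, idm y) (w, z)); cbn.
    rewrite (pmap_id _ (psh Y)); exact id.
  - intros y y' v z; apply sig_ext; extensionality x; extensionality w; cbn.
    generalize (proj2_sig (projT2 f) (x, y) (x, y') (idm x, v) (w, z)); cbn.
    rewrite (pmap_id _ (psh X)); exact id.
Defined.

Definition prcurry : PshHom X (psh_rres Z Y).
Proof.
  exists (rcurry (projT1 f)); unshelve eexists.
  - intros x w; exists (fun y z => proj1_sig (projT2 f) (x, y) (w, z)).
    intros a a' v z; generalize (proj2_sig (projT2 f) (x, a) (x, a') (idm x, v) (w, z)); cbn.
    rewrite (pmap_id _ (psh X)); exact id.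
  - intros x x' u w; apply sig_ext; extensionality y; extensionality z; cbn.
    generalize (proj2_sig (projT2 f) (x, y) (x', y) (u, idm y) (w, z)); cbn.
    rewrite (pmap_id _ (psh Y)); exact id.
Defined.

Lemma psh_lev_pcurry :
  psh_comp (psh_tensm (psh_id X) pcurry) (psh_lev X Z) = f.
Proof.
  apply psh_hom_ext; [exact (clev_curry _)|].
  intros [x y] [w z]; apply JMeq_refl.
Qed.

Lemma psh_rev_prcurry :
  psh_comp (psh_tensm prcurry (psh_id Y)) (psh_rev Z Y) = f.
Proof.
  apply psh_hom_ext; [exact (crev_rcurry _)|].
  intros [x y] [w z]; apply JMeq_refl.
Qed.

End PshCurry.

Lemma pcurry_psh_lev (X Y Z : PshOb) (g : PshHom Y (psh_lres X Z)) :
  pcurry (psh_comp (psh_tensm (psh_id X) g) (psh_lev X Z)) = g.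
Proof.
  apply psh_hom_ext; [exact (curry_clev _)|].
  intros y z; apply end_set_JMeq; [exact (curry_obj_clev _ _)|].
  intros; apply JMeq_refl.
Qed.

Lemma prcurry_psh_rev (X Y Z : PshOb) (g : PshHom X (psh_rres Z Y)) :
  prcurry (psh_comp (psh_tensm g (psh_id Y)) (psh_rev Z Y)) = g.
Proof.
  apply psh_hom_ext; [exact (rcurry_crev _)|].
  intros x w; apply end_set_JMeq; [exact (rcurry_obj_crev _ _)|].
  intros; apply JMeq_refl.
Qed.

Lemma closed_monoidal_PshCM : is_closed_monoidal PshCM.
Proof.
  split; [split; [|split]; intros; psh_hom_eq|].
  split; [intros; psh_hom_eq|].
  split; [intros; psh_hom_eq|].
  split; [intros a b c; exists (psh_alpha_inv a b c); split; psh_hom_eq|].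
  split; [intros; psh_hom_eq|].
  split; [intros a; exists (psh_lambda_inv a); split; psh_hom_eq|].
  split; [intros; psh_hom_eq|].
  split; [intros a; exists (psh_rho_inv a); split; psh_hom_eq|].
  split; [intros; psh_hom_eq|].
  split; [intros; psh_hom_eq|].
  split; [intros; psh_hom_eq|].
  split.
  - exact (lres_exists_unique_of_curry (M := PshCM)
             (@psh_lev_pcurry) (@pcurry_psh_lev)).
  - exact (rres_exists_unique_of_curry (M := PshCM)
             (@psh_rev_prcurry) (@prcurry_psh_rev)).
Qed.

Lemma cm_refinement_system_upc : is_cm_refinement_system upc PshCM CatCM.
Proof.
  split; [exact closed_monoidal_PshCM|].
  split; [exact closed_monoidal_CatCM|].
  split; [split; reflexivity|].
  exists (fun _ _ => eq_refl), eq_refl, (fun _ _ => eq_refl), (fun _ _ => eq_refl).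
  repeat split.
Qed.

(** * Pullbacks *)

Definition pullpsh_proj (A B : Category) (F : Functor A B) (psi : Presheaf B)
  : @lhom Psh (mkPsh (pullpsh F psi)) (mkPsh psi).
Proof.
  exists F; exists (fun a (y : pob (pullpsh F psi) a) => (y : pob psi (fobj F a))).
  reflexivity.
Defined.

Lemma pullback_pullpsh (A B : Category) (F : Functor A B) (psi : Presheaf B) :
  @is_pullback Psh Cat upc A (mkPsh psi) F (mkPsh (pullpsh F psi)) eq_refl
    (pullpsh_proj F psi).
Proof.
  split; [reflexivity|].
  intros P d [G beta] HG; cbn in HG; subst G.
  exists (existT _ d (exist _ (proj1_sig beta) (proj2_sig beta))); split.
  - split; [reflexivity|].
    apply psh_hom_ext; [reflexivity|]; intros; apply JMeq_refl.
  - intros [D alpha] [HD Hbeta]; cbn in HD; subst D.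
    apply inj_pair2 in Hbeta; subst beta.
    apply psh_hom_ext; [reflexivity|]; intros; apply JMeq_refl.
Qed.

(** * Pushforwards *)

Definition cls (X : Type) (R : X -> X -> Prop) (p : X) : quot R :=
  exist _ (eqv R p) (ex_intro _ p eq_refl).

Lemma cls_eqv (X : Type) (R : X -> X -> Prop) (p q : X) :
  eqv R p q -> cls R p = cls R q.
Proof.
  intro H; apply sig_ext; cbn; extensionality y; apply propositional_extensionality.
  split; intro K; eapply rst_trans; eauto using rst_sym.
Qed.

Lemma cls_surj (X : Type) (R : X -> X -> Prop) (S : quot R) : exists p, S = cls R p.
Proof. destruct S as [S [p HS]]; exists p; apply sig_ext; exact HS. Qed.

Lemma qmap_cls (X Y : Type) (R : X -> X -> Prop) (R' : Y -> Y -> Prop) (f : X -> Y)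
  (Hf : forall x y, R x y -> R' (f x) (f y)) p : qmap Hf (cls R p) = cls R' (f p).
Proof. apply sig_ext; exact (qmap_proof Hf (S := eqv R p) eq_refl). Qed.

(* [qlift f] is meaningful only when [f] respects [R]; it evaluates [f] at a
   representative chosen by [constructive_indefinite_description]. *)
Definition qlift (X Y : Type) (R : X -> X -> Prop) (f : X -> Y) (S : quot R) : Y :=
  f (proj1_sig (constructive_indefinite_description _ (proj2_sig S))).

Lemma eqv_resp (X Y : Type) (R : X -> X -> Prop) (f : X -> Y)
  (Hf : forall p q, R p q -> f p = f q) p q : eqv R p q -> f p = f q.
Proof. induction 1; congruence || auto. Qed.

Lemma qlift_cls (X Y : Type) (R : X -> X -> Prop) (f : X -> Y)
  (Hf : forall p q, R p q -> f p = f q) p : qlift f (cls R p) = f p.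
Proof.
  unfold qlift; destruct (constructive_indefinite_description _ _) as [p' Hp']; cbn in *.
  symmetry; apply (eqv_resp Hf); rewrite Hp'; apply rst_refl.
Qed.

Definition coendpsh_unit (A B : Category) (F : Functor A B) (phi : Presheaf A)
  : @lhom Psh (mkPsh phi) (mkPsh (coendpsh F phi)).
Proof.
  exists F; exists (fun a x => cls (coend_rel F phi (fobj F a))
                                  (existT _ a (idm (fobj F a), x))).
  intros a a' u x; cbn; rewrite qmap_cls; apply cls_eqv, rst_step.
  exists a, a', u, (idm _), x; split; [reflexivity|].
  unfold coend_pre; cbn; rewrite comp_idl, comp_idr; reflexivity.
Defined.

Lemma cls_coend_generator (A B : Category) (F : Functor A B) (phi : Presheaf A)
  b a (g : hom b (fobj F a)) (x : pob phi a) :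
  cls (coend_rel F phi b) (existT _ a (g, x))
  = pmap (coendpsh F phi) g (proj1_sig (projT2 (coendpsh_unit F phi)) a x).
Proof. cbn; rewrite qmap_cls; unfold coend_pre; cbn; rewrite comp_idr; reflexivity. Qed.

Section CoendLift.
Variables (A B : Category) (F : Functor A B) (phi : Presheaf A) (Q : PshOb)
  (d : Functor B (pcat Q)) (beta : PNat phi (psh Q) (fcomp F d)).

Definition coend_eval b (p : coend_carrier F phi b) : pob (psh Q) (fobj d b) :=
  pmap (psh Q) (fmap d (fst (projT2 p))) (proj1_sig beta (projT1 p) (snd (projT2 p))).

Lemma coend_eval_resp b p q : coend_rel F phi b p q -> coend_eval p = coend_eval q.
Proof.
  intros (a & a' & u & g & x & -> & ->); unfold coend_eval; cbn.
  rewrite (proj2_sig beta); cbn; rewrite (fmap_comp _ _ d), (pmap_comp _ (psh Q)).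
  reflexivity.
Qed.

Lemma coend_eval_pre b' b (h : hom b' b) p :
  coend_eval (coend_pre h p) = pmap (psh Q) (fmap d h) (coend_eval p).
Proof.
  unfold coend_eval, coend_pre; cbn.
  rewrite (fmap_comp _ _ d), (pmap_comp _ (psh Q)); reflexivity.
Qed.

Definition coend_lift : PNat (coendpsh F phi) (psh Q) d.
Proof.
  exists (fun b S => qlift (@coend_eval b) S).
  intros b' b h S; destruct (cls_surj S) as [p ->]; cbn.
  rewrite qmap_cls, !qlift_cls by apply coend_eval_resp.
  apply coend_eval_pre.
Defined.

Lemma coend_lift_cls b p :
  proj1_sig coend_lift b (cls (coend_rel F phi b) p) = coend_eval p.
Proof. exact (qlift_cls (@coend_eval_resp b) p). Qed.

End CoendLift.

Lemma pushforward_coendpsh (A B : Category) (F : Functor A B) (phi : Presheaf A) :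
  @is_pushforward Psh Cat upc (mkPsh phi) B F (mkPsh (coendpsh F phi)) eq_refl
    (coendpsh_unit F phi).
Proof.
  split; [reflexivity|].
  intros Q d [G beta] HG; cbn in HG; subst G.
  exists (existT _ d (coend_lift beta)); split.
  - split; [reflexivity|].
    apply psh_hom_ext; [reflexivity|]; intros a x; apply eq_JMeq; cbn.
    rewrite qlift_cls by apply coend_eval_resp; unfold coend_eval; cbn.
    rewrite (fmap_id _ _ d), (pmap_id _ (psh Q)); reflexivity.
  - intros [D alpha] [HD Hbeta]; cbn in HD; subst D.
    apply inj_pair2 in Hbeta.
    apply psh_hom_ext; [reflexivity|]; intros b S; apply eq_JMeq.
    destruct (cls_surj S) as [[a [g x]] ->].
    transitivity (coend_eval beta (existT _ a (g, x))); [apply coend_lift_cls|].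
    cbn [projT2]; rewrite cls_coend_generator, (proj2_sig alpha), <- Hbeta.
    reflexivity.
Qed.

Theorem proposition3p1 :
  is_cm_refinement_system upc PshCM CatCM /\
  (forall (A B : Category) (F : Functor A B) (psi : Presheaf B),
     exists lam : @lhom Psh (mkPsh (pullpsh F psi)) (mkPsh psi),
       @is_pullback Psh Cat upc A (mkPsh psi) F
         (mkPsh (pullpsh F psi)) eq_refl lam) /\
  (forall (A B : Category) (F : Functor A B) (phi : Presheaf A),
     exists kappa : @lhom Psh (mkPsh phi) (mkPsh (coendpsh F phi)),
       @is_pushforward Psh Cat upc (mkPsh phi) B F
         (mkPsh (coendpsh F phi)) eq_refl kappa).
Proof.
  split; [exact cm_refinement_system_upc|].
  split; intros A B F.
  - intro psi; exists (pullpsh_proj F psi); apply pullback_pullpsh.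
  - intro phi; exists (coendpsh_unit F phi); apply pushforward_coendpsh.
Qed.
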